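(* Let $\mathcal P$ be an energy timed path from $s_0$ to $s_n$ and $E$ an energy constraint. Then the energy relation $\mathcal R^E_{\mathcal P}$ is a closed convex subset of $E\times E$ and can be described by a finite conjunction of non-strict linear inequalities with rational coefficients over $(w_0,w_1)$. Consequently, for every $I\in\mathcal I(E)$, both $\mathcal R^E_{\mathcal P}(I)$ and $(\mathcal R^E_{\mathcal P})^{-1}(I)$ belong to $\mathcal I(E)$. The same holds for any finite composition $\mathcal R^E_{\mathcal P_k}\circ\cdots\circ\mathcal R^E_{\mathcal P_1}$ of such energy relations.
   Context: An energy timed automaton (ETA) is a tuple $\langle S,S_0,X,\mathrm{Inv},r,T\rangle$ where $S$ is a finite set of states, $S_0\subseteq S$ the initial states, $X$ a finite set of clocks, $\mathrm{Inv}$ assigns to each state an invariant which is a conjunction of closed (non-strict) clock constraints $x\bowtie c$ with $\bowtie\in\{\le,\ge,=\}$ and $c$ rational, $r\colon S\to\mathbb Q$ assigns an energy rate to each state, and $T$ is a finite set of transitions $(s,g,u,z,s')$ with $g$ a closed clock constraint (guard), $u\in\mathbb Q$ an energy update, and $z\subseteq X$ a set of clocks to reset. Given transitions $t_i=(s_i,g_i,u_i,z_i,s_{i+1})$, $0\le i<n$, a finite run is a sequence of configurations $(\ell_j,v_j,w_j)_{0\le j\le 2n}$ for which there exist delays $d_i\ge 0$ with: $\ell_{2j}=\ell_{2j+1}=s_j$, $\ell_{2n}=s_n$; $v_{2j+1}=v_{2j}+d_j$, $v_{2j+2}=v_{2j+1}[z_j\to0]$; $v_{2j}\models\mathrm{Inv}(s_j)$,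 $v_{2j+1}\models \mathrm{Inv}(s_j)\wedge g_j$; $w_{2j+1}=w_{2j}+d_j\,r(s_j)$, $w_{2j+2}=w_{2j+1}+u_j$. An energy constraint is a closed interval $E$ with rational bounds; a run satisfies $E$ if all its energy levels lie in $E$. $\mathcal I(E)$ is the set of closed subintervals of $E$ (including $\emptyset$). An energy timed path (ETP) from $s_0$ to $s_n$ is an ETA with states $s_0,\dots,s_n$, initial state $s_0$, and exactly one transition from $s_i$ to $s_{i+1}$ for each $i<n$. The energy relation $\mathcal R^E_{\mathcal P}(w_0,w_1)$ holds iff there is a finite run of $\mathcal P$ from $(s_0,\mathbf 0,w_0)$ to $(s_n,\mathbf 0,w_1)$ satisfying $E$. For $I\in\mathcal I(E)$: $\mathcal R(I)=\{w_1\in E\mid\exists w_0\in I.\ \mathcal R(w_0,w_1)\}$, $\mathcal R^{-1}(I)=\{w_0\in E\mid \exists w_1\in I.\ \mathcal R(w_0,w_1)\}$. *)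

From HB Require Import structures.
From mathcomp Require Import all_boot all_order all_algebra.
Set Implicit Arguments. Unset Strict Implicit. Unset Printing Implicit Defensive.
Import Order.TTheory GRing.Theory Num.Theory.
Local Open Scope ring_scope.

Inductive cmp := CLe | CGe | CEq.

Record atom (m : nat) := Atom { at_clock : 'I_m; at_op : cmp; at_const : rat }.

Definition constr (m : nat) := seq (atom m).

Section Sem.
Variable R : realFieldType.
Variable m : nat.

Definition valuation := 'I_m -> R.

Definition sat_atom (v : valuation) (a : atom m) : bool :=
  match at_op a with
  | CLe => v (at_clock a) <= ratr (at_const a)
  | CGe => ratr (at_const a) <= v (at_clock a)
  | CEq => v (at_clock a) == ratr (at_const a)
  end.

Definition sat (v : valuation) (g : constr m) : bool := all (sat_atom v) g.

Definition delay (v : valuation) (d : R) : valuation := fun x => v x + d.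

Definition reset (z : {set 'I_m}) (v : valuation) : valuation :=
  fun x => if x \in z then 0 else v x.
End Sem.

(* An energy timed path s_0 -> ... -> s_n over the clock set 'I_m.
   etp_inv i, etp_rate i : invariant and rate of state s_i (i <= n);
   etp_guard i, etp_upd i, etp_reset i : guard, update and reset set of the
   unique transition s_i -> s_{i+1} (i < n). Values at other indices are
   irrelevant. *)
Record etp (m : nat) := ETP {
  etp_len : nat;
  etp_inv : nat -> constr m;
  etp_rate : nat -> rat;
  etp_guard : nat -> constr m;
  etp_upd : nat -> rat;
  etp_reset : nat -> {set 'I_m} }.

Section Runs.
Variable R : realFieldType.

Definition inE (lo hi : rat) (w : R) : bool := (ratr lo <= w) && (w <= ratr hi).

Variables (m : nat) (P : etp m).

(* v_{2j}: valuation on entering state s_j, given the delays d *)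
Fixpoint run_val (d : nat -> R) (j : nat) : valuation R m :=
  match j with
  | 0 => fun _ => 0
  | j'.+1 => reset (etp_reset P j') (delay (run_val d j') (d j'))
  end.

(* w_{2j}: energy on entering state s_j, given w_0 and the delays d *)
Fixpoint run_en (w0 : R) (d : nat -> R) (j : nat) : R :=
  match j with
  | 0 => w0
  | j'.+1 => run_en w0 d j' + d j' * ratr (etp_rate P j') + ratr (etp_upd P j')
  end.

Definition run_ok (lo hi : rat) (d : nat -> R) (w0 w1 : R) : Prop :=
  let n := etp_len P in
  (forall j, (j < n)%N ->
     0 <= d j /\
     sat (run_val d j) (etp_inv P j) /\
     sat (delay (run_val d j) (d j)) (etp_inv P j) /\
     sat (delay (run_val d j) (d j)) (etp_guard P j) /\
     inE lo hi (run_en w0 d j) /\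
     inE lo hi (run_en w0 d j + d j * ratr (etp_rate P j)))
  /\ inE lo hi (run_en w0 d n)
  /\ (forall x, run_val d n x = 0)
  /\ run_en w0 d n = w1.

Definition energy_rel (lo hi : rat) (w0 w1 : R) : Prop :=
  exists d : nat -> R, run_ok lo hi d w0 w1.
End Runs.

(* composition R_{P_k} o ... o R_{P_1} for the list [:: P_1; ...; P_k]
   (each path may have its own set of clocks) *)
Fixpoint comp_rel (R : realFieldType) (lo hi : rat) (ps : seq {m : nat & etp m})
  : R -> R -> Prop :=
  match ps with
  | [::] => fun w0 w1 => w0 = w1
  | p :: ps' => fun w0 w2 =>
      exists w1, energy_rel (projT2 p) lo hi w0 w1 /\ comp_rel lo hi ps' w1 w2
  end.

Definition is_subint (R : realFieldType) (lo hi : rat) (S : R -> Prop) : Prop :=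
  (forall x, ~ S x) \/
  exists a b : R, [/\ a <= b, ratr lo <= a, b <= ratr hi &
                      forall x, S x <-> a <= x <= b].

Definition rel_image (R : realFieldType) (lo hi : rat) (Rel : R -> R -> Prop)
  (I : R -> Prop) : R -> Prop :=
  fun w1 => inE lo hi w1 /\ exists w0, I w0 /\ Rel w0 w1.
Definition rel_preimage (R : realFieldType) (lo hi : rat) (Rel : R -> R -> Prop)
  (I : R -> Prop) : R -> Prop :=
  fun w0 => inE lo hi w0 /\ exists w1, I w1 /\ Rel w0 w1.

Definition energy_rel_props (R : realFieldType) (lo hi : rat)
  (Rel : R -> R -> Prop) : Prop :=
  [/\ (forall w0 w1, Rel w0 w1 -> inE lo hi w0 /\ inE lo hi w1),
      (forall w0 w1 w0' w1' (t : R), 0 <= t <= 1 -> Rel w0 w1 -> Rel w0' w1' ->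
          Rel (t * w0 + (1 - t) * w0') (t * w1 + (1 - t) * w1')),
      (exists cs : seq (rat * rat * rat), forall w0 w1,
          Rel w0 w1 <->
          all (fun t => ratr t.1.1 * w0 + ratr t.1.2 * w1 <= ratr t.2) cs)
    & (forall I : R -> Prop, is_subint lo hi I ->
          is_subint lo hi (rel_image lo hi Rel I) /\
          is_subint lo hi (rel_preimage lo hi Rel I))].

(* A run of the path is determined by w0 and the delays d_0, ..., d_{n-1}, and
   every clock value and energy level along it is an affine function of
   (w0, d) with rational coefficients.  Hence "some run leads from w0 to w1"
   is the projection onto (w0, w1) of a finite system of non-strict rational
   linear inequalities in (w0, w1, d), and Fourier-Motzkin elimination of the
   delays turns it into such a system in (w0, w1) alone; this gives closedness,
   convexity and the linear description, and composition is one more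
   elimination.  The image of an interval [a, b] is obtained by eliminating
   the source energy from a system in which a and b occur as variables;
   substituting them leaves a system in one variable, whose solution set
   inside E is a closed interval. *)

From Pilot Require Import Defs.
From HB Require Import structures.
From mathcomp Require Import all_boot all_order all_algebra.
From mathcomp Require Import ring lra zify.
Set Implicit Arguments. Unset Strict Implicit. Unset Printing Implicit Defensive.
Import Order.TTheory GRing.Theory Num.Theory.
Local Open Scope ring_scope.

Lemma all_allpairs (S T U : Type) (p : pred U) (f : S -> T -> U) s t :
  all p [seq f x y | x <- s, y <- t] = all (fun x => all (fun y => p (f x y)) t) s.
Proof. by elim: s => //= x s IH; rewrite all_cat all_map IH. Qed.

Section OneVariable.
Variable R : realFieldType.
Implicit Types (L : seq (R * R)) (w : R).

Definition sat1 L w := all (fun p => p.1 * w <= p.2) L.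

Lemma exists_between (T : Type) (A B : seq T) (f g : T -> R) :
  all (fun a => all (fun b => f a <= g b) B) A ->
  exists t, all (fun a => f a <= t) A && all (fun b => t <= g b) B.
Proof.
have [t0 t0B] : exists t, all (fun b => t <= g b) B.
  elim: B => [|b B [t tB]]; first by exists 0.
  exists (Num.min (g b) t) => /=; rewrite ge_min lexx.
  by apply: sub_all tB => b' tb'; rewrite ge_min tb' orbT.
elim: A => [|a A IH] /=; first by exists t0.
move=> /andP[aB /IH [t /andP[At tB]]].
exists (Num.max (f a) t); rewrite le_max lexx /=; apply/andP; split.
- by apply: sub_all At => a' a't; rewrite le_max a't orbT.
- have : all (fun b => (f a <= g b) && (t <= g b)) B by rewrite all_predI aB tB.
  by apply: sub_all => b; rewrite ge_max.
Qed.

Lemma exists_sat1P L :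
  (exists w, sat1 L w) <->
  all (fun p => (p.1 == 0) ==> (0 <= p.2)) L &&
  all (fun p => (0 < p.1) ==>
         all (fun q => (q.1 < 0) ==> (0 <= p.1 * q.2 - q.1 * p.2)) L) L.
Proof.
split=> [[w Lw]|/andP[zeroL posnegL]].
  apply/andP; split; first by apply: sub_all Lw => p; case: eqP => //= ->; rewrite mul0r.
  apply: sub_all (Lw) => p pw; apply/implyP => p_gt0.
  by apply: sub_all Lw => q qw; apply/implyP => q_lt0; nra.
have [w /andP[lowL upL]] :
    exists w, all (fun q => q.2 / q.1 <= w) [seq q <- L | q.1 < 0] &&
              all (fun p => w <= p.2 / p.1) [seq p <- L | 0 < p.1].
  apply: exists_between; rewrite all_filter; apply/allP => q qL; apply/implyP => q_lt0.
  rewrite all_filter; apply/allP => p pL; apply/implyP => p_gt0.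
  have := allP posnegL p pL; rewrite p_gt0 => /allP/(_ q qL); rewrite q_lt0 /=.
  have qE := divfK (ltr0_neq0 q_lt0) q.2; have pE := divfK (lt0r_neq0 p_gt0) p.2.
  have pq_gt0 : 0 < p.1 * - q.1 by rewrite mulr_gt0 ?oppr_gt0.
  move: (q.2 / q.1) (p.2 / p.1) qE pE => u v <- <-.
  by rewrite (_ : _ - _ = p.1 * - q.1 * (v - u)) ?pmulr_rge0 ?subr_ge0 //; ring.
exists w; apply/allP => p pL; rewrite mulrC.
case: (ltrgtP p.1 0) => p0.
- by rewrite -ler_ndivrMr //; move/allP: lowL; apply; rewrite mem_filter p0.
- by rewrite -ler_pdivlMr //; move/allP: upL; apply; rewrite mem_filter p0.
- by move/allP/(_ p pL): zeroL; rewrite p0 eqxx mulr0.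
Qed.

Definition sat1_lower s L :=
  foldr (fun p b => if p.1 < 0 then Num.max (p.2 / p.1) b else b) s L.
Definition sat1_upper t L :=
  foldr (fun p b => if 0 < p.1 then Num.min (p.2 / p.1) b else b) t L.
Definition sat1_trivial L := all (fun p => (p.1 != 0) || (0 <= p.2)) L.

Lemma sat1_boxE L s t w :
  ((s <= w <= t) && sat1 L w) =
  sat1_trivial L && (sat1_lower s L <= w <= sat1_upper t L).
Proof.
elim: L => [|p L IH] /=; first by rewrite andbT.
rewrite andbCA IH; case: (ltrgtP p.1 0) => p0 /=.
- rewrite ge_max mulrC -ler_ndivrMr //.
  by case: (_ / _ <= w); rewrite /= ?andbF.
- rewrite le_min mulrC -ler_pdivlMr //.
  by case: (w <= _ / _); rewrite /= ?andbF.
- by rewrite p0 mul0r; case: (0 <= p.2).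
Qed.

Lemma sat1_lower_ge s L : s <= sat1_lower s L.
Proof. by elim: L => [|p L IH] //=; case: ifP => // _; rewrite le_max IH orbT. Qed.

Lemma sat1_upper_le t L : sat1_upper t L <= t.
Proof. by elim: L => [|p L IH] //=; case: ifP => // _; rewrite ge_min IH orbT. Qed.

Lemma is_subint_ext lo hi (S T : R -> Prop) :
  (forall x, S x <-> T x) -> is_subint lo hi S -> is_subint lo hi T.
Proof.
move=> ST [S0|[a [b [ab loa bhi Sab]]]]; first by left => x /ST /S0.
by right; exists a, b; split => // x; rewrite -ST.
Qed.

Lemma sat1_subint lo hi L :
  is_subint lo hi (fun w => Defs.inE lo hi w /\ sat1 L w).
Proof.
have boxE w : Defs.inE lo hi w && sat1 L w =
    sat1_trivial L && (sat1_lower (ratr lo) L <= w <= sat1_upper (ratr hi) L).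
  exact: sat1_boxE.
have [/andP[okL ab]|not_ab] := boolP (sat1_trivial L && (sat1_lower (ratr lo) L <= sat1_upper (ratr hi) L)).
  right; exists (sat1_lower (ratr lo) L), (sat1_upper (ratr hi) L).
  split => //; [exact: sat1_lower_ge | exact: sat1_upper_le |] => w.
  by rewrite -[_ <= w <= _]andTb -okL -boxE; split => [[-> ->]|/andP[]].
left => w [Ew Lw]; move: not_ab; have := boxE w; rewrite Ew Lw.
by case/esym/andP => -> /andP[lw wu]; rewrite (le_trans lw wu).
Qed.

End OneVariable.

Definition lform := nat -> rat.
Definition ineq := (lform * rat)%type.
Definition aff := (lform * rat)%type.

Definition lf_add (f g : lform) : lform := fun i => f i + g i.
Definition lf_scale (a : rat) (f : lform) : lform := fun i => a * f i.
Definition lf0 : lform := fun _ => 0.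
Definition lf_var (k : nat) : lform := fun i => if i == k then 1 else 0.

Section LinearSystems.
Variable R : realFieldType.
Implicit Types (x y : nat -> R) (f : lform) (k : ineq) (cs : seq ineq).

Definition leval N f x : R := \sum_(i < N) ratr (f i) * x i.
Definition ineq_holds N k x := leval N k.1 x <= ratr k.2.
Definition sys_holds N cs x := all (fun k => ineq_holds N k x) cs.
Definition set_var x j (t : R) : nat -> R := fun i => if i == j then t else x i.

Lemma leval0 f x : leval 0 f x = 0.
Proof. by rewrite /leval big_ord0. Qed.

Lemma leval_recr N f x : leval N.+1 f x = leval N f x + ratr (f N) * x N.
Proof. by rewrite /leval big_ord_recr. Qed.

Lemma eq_leval N f x y : (forall i, (i < N)%N -> x i = y i) -> leval N f x = leval N f y.
Proof. by move=> xy; apply: eq_bigr => i _; rewrite xy. Qed.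

Lemma eq_sys_holds N cs x y :
  (forall i, (i < N)%N -> x i = y i) -> sys_holds N cs x = sys_holds N cs y.
Proof. by move=> xy; apply: eq_all => k; rewrite /ineq_holds (eq_leval _ xy). Qed.

Lemma sys_holds1 N k x : sys_holds N [:: k] x = ineq_holds N k x.
Proof. exact: andbT. Qed.

Lemma sys_holds_cat N cs1 cs2 x :
  sys_holds N (cs1 ++ cs2) x = sys_holds N cs1 x && sys_holds N cs2 x.
Proof. exact: all_cat. Qed.

Lemma sys_holds_flatten (T : Type) N (F : T -> seq ineq) s x :
  sys_holds N (flatten [seq F i | i <- s]) x = all (fun i => sys_holds N (F i) x) s.
Proof. by elim: s => //= i s IH; rewrite sys_holds_cat IH. Qed.

Lemma leval_add N f g x : leval N (lf_add f g) x = leval N f x + leval N g x.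
Proof. by rewrite /leval -big_split; apply: eq_bigr => i _; rewrite rmorphD mulrDl. Qed.

Lemma leval_scale N a f x : leval N (lf_scale a f) x = ratr a * leval N f x.
Proof. by rewrite /leval mulr_sumr; apply: eq_bigr => i _; rewrite rmorphM mulrA. Qed.

Lemma leval_lf0 N x : leval N lf0 x = 0.
Proof. by rewrite /leval big1 // => i _; rewrite rmorph0 mul0r. Qed.

Lemma leval_var N i x : leval N (lf_var i) x = if (i < N)%N then x i else 0.
Proof.
elim: N => [|N IH]; first by rewrite leval0.
rewrite leval_recr IH /lf_var ltnS.
by case: (ltngtP i N) => [||->]; rewrite ?rmorph0 ?rmorph1 ?mul0r ?addr0 ?mul1r ?add0r.
Qed.

Lemma leval_split N f x j : (j < N)%N ->
  leval N f x = leval N f (set_var x j 0) + ratr (f j) * x j.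
Proof.
elim: N => [//|N IH]; rewrite ltnS leq_eqVlt => /orP[/eqP ->|jN].
  rewrite !leval_recr /set_var eqxx mulr0 addr0; congr (_ + _).
  by apply: eq_leval => i iN; rewrite (ltn_eqF iN).
by rewrite !leval_recr (IH jN) /set_var (gtn_eqF jN) addrAC.
Qed.

Lemma leval_set_var N f x j t : (j < N)%N ->
  leval N f (set_var x j t) = leval N f (set_var x j 0) + ratr (f j) * t.
Proof.
move=> jN; rewrite (leval_split _ _ jN) /set_var eqxx; congr (_ + _).
by apply: eq_leval => i _; case: eqP.
Qed.

Lemma leval_trunc K N f x : (K <= N)%N -> (forall i, (K <= i)%N -> x i = 0) ->
  leval N f x = leval K f x.
Proof.
move=> + x0; elim: N => [|N IH]; first by rewrite leqn0 => /eqP ->.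
rewrite leq_eqVlt => /orP[/eqP -> //|]; rewrite ltnS => KN.
by rewrite leval_recr IH // x0 // mulr0 addr0.
Qed.

Definition ineq_comb (a1 : rat) k1 (a2 : rat) k2 : ineq :=
  (lf_add (lf_scale a1 k1.1) (lf_scale a2 k2.1), a1 * k1.2 + a2 * k2.2).

Definition fourier_motzkin j cs : seq ineq :=
  [seq k <- cs | k.1 j == 0] ++
  [seq ineq_comb (- k2.1 j) k1 (k1.1 j) k2 |
     k1 <- [seq k <- cs | 0 < k.1 j], k2 <- [seq k <- cs | k.1 j < 0]].

Lemma fourier_motzkinP N j cs x : (j < N)%N ->
  (exists t, sys_holds N cs (set_var x j t)) <-> sys_holds N (fourier_motzkin j cs) x.
Proof.
move=> jN; pose rest k := ratr k.2 - leval N k.1 (set_var x j 0).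
pose L := [seq (ratr (k.1 j) : R, rest k) | k <- cs].
have holdsE k t : ineq_holds N k (set_var x j t) = (ratr (k.1 j) * t <= rest k).
  by rewrite /ineq_holds leval_set_var // lerBrDl.
have holdsxE k : ineq_holds N k x = (ratr (k.1 j) * x j <= rest k).
  by rewrite /ineq_holds (leval_split _ _ jN) lerBrDl.
have combE k1 k2 : ineq_holds N (ineq_comb (- k2.1 j) k1 (k1.1 j) k2) x =
    (0 <= ratr (k1.1 j) * rest k2 - ratr (k2.1 j) * rest k1).
  rewrite /ineq_holds leval_add !leval_scale.
  rewrite (leval_split k1.1 x jN) (leval_split k2.1 x jN) /rest /= rmorphD !rmorphM !rmorphN.
  by apply/idP/idP => ?; lra.
have -> : sys_holds N (fourier_motzkin j cs) x =
    all (fun p => (p.1 == 0) ==> (0 <= p.2)) L &&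
    all (fun p => (0 < p.1) ==>
           all (fun q => (q.1 < 0) ==> (0 <= p.1 * q.2 - q.1 * p.2)) L) L.
  rewrite sys_holds_cat /sys_holds all_filter all_allpairs all_filter !all_map.
  congr andb; apply: eq_all => k1 /=.
    by rewrite holdsxE fmorph_eq0; case: eqP => // ->; rewrite rmorph0 mul0r.
  rewrite ltr0q all_filter all_map; congr implb.
  by apply: eq_all => k2 /=; rewrite ltrq0 combE.
rewrite -exists_sat1P; split=> [[t csx]|[t Lt]]; exists t.
- by rewrite /sat1 /L all_map; apply: sub_all csx => k; rewrite holdsE.
- by move: Lt; rewrite /sat1 /L all_map; apply: sub_all => k; rewrite holdsE.
Qed.

Lemma sys_project N K cs : (K <= N)%N -> exists cs', forall x,
  (exists y, (forall i, (i < K)%N -> y i = x i) /\ sys_holds N cs y) <->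
  sys_holds N cs' x.
Proof.
move=> KN; suff: forall n, (n <= N)%N -> exists cs', forall x,
    (exists y, (forall i, (i < N - n)%N -> y i = x i) /\ sys_holds N cs y) <->
    sys_holds N cs' x.
  by move/(_ (N - K)%N (leq_subr K N)); rewrite subKn.
elim=> [|n IH] nN.
  exists cs => x; rewrite subn0; split=> [[y [yx]]|csx]; last by exists x.
  by rewrite (eq_sys_holds _ yx).
have [cs1 cs1P] := IH (ltnW nN); set j := (N - n.+1)%N.
have jN : (j < N)%N by rewrite /j; lia.
exists (fourier_motzkin j cs1) => x; rewrite -fourier_motzkinP //; split.
- move=> [y [yx ycs]]; exists (y j); apply/cs1P; exists y; split => // i iN.
  by rewrite /set_var; case: eqP => [->|ij] //; apply: yx; rewrite /j; lia.
- move=> [t /cs1P [y [yx ycs]]]; exists y; split => // i ij.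
  by rewrite yx ?/set_var ?(ltn_eqF ij) //; rewrite /j in ij *; lia.
Qed.

Definition aff_eval N (a : aff) x : R := leval N a.1 x + ratr a.2.
Definition aff_shift (a : aff) (q : rat) : aff := (a.1, a.2 + q).
Definition aff_add_var (a : aff) (r : rat) (i : nat) : aff :=
  (lf_add a.1 (lf_scale r (lf_var i)), a.2).

Definition aff_le (a : aff) (q : rat) : ineq := (a.1, q - a.2).
Definition aff_ge (a : aff) (q : rat) : ineq := (lf_scale (-1) a.1, a.2 - q).
Definition aff_eq (a : aff) (q : rat) : seq ineq := [:: aff_le a q; aff_ge a q].
Definition aff_in (lo hi : rat) (a : aff) : seq ineq := [:: aff_ge a lo; aff_le a hi].

Lemma aff_eval0 N x : aff_eval N (lf0, 0) x = 0.
Proof. by rewrite /aff_eval leval_lf0 rmorph0 addr0. Qed.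

Lemma aff_shiftE N a q x : aff_eval N (aff_shift a q) x = aff_eval N a x + ratr q.
Proof. by rewrite /aff_eval rmorphD addrA. Qed.

Lemma aff_add_varE N a r i x : (i < N)%N ->
  aff_eval N (aff_add_var a r i) x = aff_eval N a x + ratr r * x i.
Proof. by move=> iN; rewrite /aff_eval leval_add leval_scale leval_var iN addrAC. Qed.

Lemma aff_leP N a q x : ineq_holds N (aff_le a q) x = (aff_eval N a x <= ratr q).
Proof. by rewrite /ineq_holds rmorphB lerBrDr. Qed.

Lemma aff_geP N a q x : ineq_holds N (aff_ge a q) x = (ratr q <= aff_eval N a x).
Proof. by rewrite /ineq_holds leval_scale rmorphN1 mulN1r rmorphB lerNl opprB lerBlDr. Qed.

Lemma aff_eqP N a q x : sys_holds N (aff_eq a q) x = (aff_eval N a x == ratr q).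
Proof. by rewrite /sys_holds /= aff_leP aff_geP andbT eq_le. Qed.

Lemma aff_inP N lo hi a x : sys_holds N (aff_in lo hi a) x = Defs.inE lo hi (aff_eval N a x).
Proof. by rewrite /sys_holds /= aff_leP aff_geP andbT. Qed.

End LinearSystems.

Section Polyhedra.
Variable R : realFieldType.
Implicit Types (Rel : R -> R -> Prop) (cs : seq (rat * rat * rat)).

Definition sat2 cs (u v : R) : bool :=
  all (fun t => ratr t.1.1 * u + ratr t.1.2 * v <= ratr t.2) cs.

Definition polyhedral Rel := exists cs, forall u v, Rel u v <-> sat2 cs u v.

Definition place2 i j cs : seq ineq :=
  [seq (lf_add (lf_scale t.1.1 (lf_var i)) (lf_scale t.1.2 (lf_var j)), t.2) | t <- cs].

Lemma place2_holds N i j cs (y : nat -> R) : (i < N)%N -> (j < N)%N ->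
  sys_holds N (place2 i j cs) y = sat2 cs (y i) (y j).
Proof.
move=> iN jN; rewrite /sys_holds all_map; apply: eq_all => t.
by rewrite /ineq_holds /= leval_add !leval_scale !leval_var iN jN.
Qed.

Lemma sat2_le (u v : R) : sat2 [:: (1, -1, 0)] u v = (u <= v).
Proof. by rewrite /sat2 /= rmorph1 rmorphN1 rmorph0 mul1r mulN1r andbT subr_le0. Qed.

Lemma polyhedral_ext Rel1 Rel2 :
  polyhedral Rel1 -> (forall u v, Rel1 u v <-> Rel2 u v) -> polyhedral Rel2.
Proof. by move=> [cs csP] R12; exists cs => u v; rewrite -R12. Qed.

Lemma polyhedral_flip Rel : polyhedral Rel -> polyhedral (fun u v => Rel v u).
Proof.
move=> [cs csP]; exists [seq (t.1.2, t.1.1, t.2) | t <- cs] => u v.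
suff -> : sat2 [seq (t.1.2, t.1.1, t.2) | t <- cs] u v = sat2 cs v u by [].
by rewrite /sat2 all_map; apply: eq_all => t /=; rewrite addrC.
Qed.

Lemma polyhedral_convex Rel : polyhedral Rel ->
  forall u v u' v' (t : R), 0 <= t <= 1 -> Rel u v -> Rel u' v' ->
    Rel (t * u + (1 - t) * u') (t * v + (1 - t) * v').
Proof.
move=> [cs csP] u v u' v' t /andP[t0 t1] /csP uv /csP uv'; apply/csP.
have : all (fun s => (ratr s.1.1 * u + ratr s.1.2 * v <= ratr s.2) &&
                     (ratr s.1.1 * u' + ratr s.1.2 * v' <= ratr s.2)) cs.
  by rewrite all_predI; apply/andP.
apply: sub_all => -[[p q] c] /andP[/= le1 le2]; nra.
Qed.

Lemma polyhedral_proj N (C : seq ineq) : (2 <= N)%N ->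
  polyhedral (fun u v => exists y, [/\ y 0%N = u, y 1%N = v & sys_holds N C y]).
Proof.
move=> N2; have [cs' cs'P] := sys_project R C N2.
exists [seq (k.1 0%N, k.1 1%N, k.2) | k <- cs'] => u v.
pose x i : R := match i with 0 => u | 1 => v | _ => 0 end.
have -> : sat2 [seq (k.1 0%N, k.1 1%N, k.2) | k <- cs'] u v = sys_holds N cs' x.
  rewrite /sat2 all_map; apply: eq_all => k.
  rewrite /ineq_holds (leval_trunc _ N2) => [|[|[|i]]] //.
  by rewrite !leval_recr leval0 add0r.
rewrite -cs'P; split=> [[y [y0 y1 ycs]]|[y [yx ycs]]].
- by exists y; split => // -[|[|i]].
- by exists y; split; rewrite ?yx.
Qed.

Lemma polyhedral_comp Rel1 Rel2 : polyhedral Rel1 -> polyhedral Rel2 ->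
  polyhedral (fun u w => exists v, Rel1 u v /\ Rel2 v w).
Proof.
move=> [cs1 cs1P] [cs2 cs2P].
apply: polyhedral_ext (polyhedral_proj (place2 0 2 cs1 ++ place2 2 1 cs2) (isT : 2 <= 3)%N) _.
move=> u w; split=> [[y [<- <-]]|[v [/cs1P uv /cs2P vw]]].
- by rewrite sys_holds_cat !place2_holds // => /andP[/cs1P uv /cs2P vw]; exists (y 2%N).
- exists (fun i => match i with 0 => u | 1 => w | _ => v end).
  by rewrite sys_holds_cat !place2_holds //= uv vw.
Qed.

Lemma sat2_image_subint lo hi cs (a b : R) :
  is_subint lo hi (fun v => Defs.inE lo hi v /\ exists u, a <= u <= b /\ sat2 cs u v).
Proof.
(* The real endpoints a and b cannot be rational constants of the system, so
   they enter as variables 1 and 2 (v is variable 0, u variable 3). *)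
pose C := place2 1 3 [:: (1, -1, 0)] ++ place2 3 2 [:: (1, -1, 0)] ++ place2 3 0 cs.
have [cs' cs'P] := sys_project R C (isT : 3 <= 4)%N.
pose L := [seq (ratr (k.1 0%N) : R, ratr k.2 - ratr (k.1 1%N) * a - ratr (k.1 2%N) * b)
          | k <- cs'].
apply: is_subint_ext (sat1_subint lo hi L) => v.
pose x i : R := match i with 0 => v | 1 => a | 2 => b | _ => 0 end.
have -> : sat1 L v = sys_holds 4 cs' x.
  rewrite /sat1 /L all_map; apply: eq_all => k /=.
  rewrite /ineq_holds (@leval_trunc _ 3) // => [|[|[|[|i]]]] //.
  by rewrite !leval_recr leval0 /=; apply/idP/idP => ?; lra.
have CE y : sys_holds 4 C y = [&& y 1%N <= y 3%N, y 3%N <= y 2%N & sat2 cs (y 3%N) (y 0%N)].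
  by rewrite !sys_holds_cat !place2_holds // !sat2_le.
rewrite -cs'P; split=> -[vE uP]; split=> //.
- move: uP => [y [yx]]; rewrite CE.
  have [y0 y1 y2] : [/\ y 0%N = v, y 1%N = a & y 2%N = b] by split; apply: yx.
  by rewrite y0 y1 y2 => /and3P[au ub uv]; exists (y 3%N); rewrite au ub.
- move: uP => [u [/andP[au ub] uv]]; exists (set_var x 3 u); split=> [[|[|[|]]]|] //.
  by rewrite CE /set_var /= au ub uv.
Qed.

Lemma polyhedral_image_subint lo hi Rel (I : R -> Prop) :
  polyhedral Rel -> is_subint lo hi I -> is_subint lo hi (rel_image lo hi Rel I).
Proof.
move=> [cs csP] [I0|[a [b [_ _ _ IE]]]]; first by left => v [_ [u [/I0]]].
apply: is_subint_ext (sat2_image_subint lo hi cs a b) => v.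
split=> -[vE [u [uI uv]]]; split=> //; exists u; split.
- exact/IE.
- exact/csP.
- exact/IE.
- exact/csP.
Qed.

Lemma energy_rel_propsP lo hi Rel :
  (forall u v, Rel u v -> Defs.inE lo hi u /\ Defs.inE lo hi v) -> polyhedral Rel ->
  energy_rel_props lo hi Rel.
Proof.
move=> RelE RelP; split => //; first exact: polyhedral_convex.
by move=> I II; split; apply: polyhedral_image_subint => //; exact: polyhedral_flip.
Qed.

End Polyhedra.

Section ClockConstraints.
Variables (R : realFieldType) (m : nat).

Lemma sat_cat (v : valuation R m) g1 g2 : sat v (g1 ++ g2) = sat v g1 && sat v g2.
Proof. exact: all_cat. Qed.

Definition atom_ineqs (A : 'I_m -> aff) (a : atom m) : seq ineq :=
  match at_op a with
  | CLe => [:: aff_le (A (at_clock a)) (at_const a)]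
  | CGe => [:: aff_ge (A (at_clock a)) (at_const a)]
  | CEq => aff_eq (A (at_clock a)) (at_const a)
  end.

Definition constr_ineqs (A : 'I_m -> aff) (g : constr m) : seq ineq :=
  flatten [seq atom_ineqs A a | a <- g].

Lemma constr_ineqsP N (A : 'I_m -> aff) (v : valuation R m) g x :
  (forall c, v c = aff_eval N (A c) x) -> sat v g = sys_holds N (constr_ineqs A g) x.
Proof.
move=> vA; rewrite sys_holds_flatten; apply: eq_all => -[c [] q].
- by rewrite /sat_atom /sys_holds /= aff_leP vA andbT.
- by rewrite /sat_atom /sys_holds /= aff_geP vA andbT.
- by rewrite /sat_atom /= aff_leP aff_geP andbT vA eq_le.
Qed.

End ClockConstraints.

Section EnergyPath.
Variables (R : realFieldType) (m : nat) (P : etp m) (lo hi : rat).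
Local Notation n := (etp_len P).
Local Notation N := (etp_len P).+2.

(* Variable 0 is the initial energy w0, variable 1 the final energy w1 and
   variable j.+2 the delay d_j spent in state s_j. *)
Definition run_point (w0 w1 : R) (d : nat -> R) : nat -> R :=
  fun i => match i with 0 => w0 | 1 => w1 | j.+2 => d j end.

Fixpoint clock_aff (j : nat) (c : 'I_m) : aff :=
  if j is j'.+1 then
    if c \in etp_reset P j' then (lf0, 0) else aff_add_var (clock_aff j' c) 1 j'.+2
  else (lf0, 0).

Definition delayed_clock_aff j c := aff_add_var (clock_aff j c) 1 j.+2.

Fixpoint energy_aff (j : nat) : aff :=
  if j is j'.+1 then
    aff_shift (aff_add_var (energy_aff j') (etp_rate P j') j'.+2) (etp_upd P j')
  else (lf_var 0, 0).

Definition delayed_energy_aff j := aff_add_var (energy_aff j) (etp_rate P j) j.+2.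

Lemma clock_affE w0 w1 d j c : (j <= n)%N ->
  run_val P d j c = aff_eval N (clock_aff j c) (run_point w0 w1 d).
Proof.
elim: j => [|j IH] jn /=; first by rewrite aff_eval0.
rewrite /reset /delay; case: ifP => _; first by rewrite aff_eval0.
by rewrite aff_add_varE // IH 1?ltnW // rmorph1 mul1r.
Qed.

Lemma energy_affE w0 w1 d j : (j <= n)%N ->
  run_en P w0 d j = aff_eval N (energy_aff j) (run_point w0 w1 d).
Proof.
elim: j => [|j IH] jn /=; first by rewrite /aff_eval leval_var rmorph0 addr0.
by rewrite aff_shiftE aff_add_varE // IH 1?ltnW // mulrC.
Qed.

Definition step_ineqs j : seq ineq :=
  aff_ge (lf_var j.+2, 0) 0 ::
  constr_ineqs (clock_aff j) (etp_inv P j) ++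
  constr_ineqs (delayed_clock_aff j) (etp_inv P j ++ etp_guard P j) ++
  aff_in lo hi (energy_aff j) ++ aff_in lo hi (delayed_energy_aff j).

Lemma step_ineqsP w0 w1 d j : (j < n)%N ->
  sys_holds N (step_ineqs j) (run_point w0 w1 d) =
  [&& 0 <= d j, sat (run_val P d j) (etp_inv P j),
      sat (delay (run_val P d j) (d j)) (etp_inv P j ++ etp_guard P j),
      Defs.inE lo hi (run_en P w0 d j) &
      Defs.inE lo hi (run_en P w0 d j + d j * ratr (etp_rate P j))].
Proof.
move=> jn; have jN : (j.+2 < N)%N by [].
rewrite /step_ineqs -cat1s !sys_holds_cat sys_holds1 aff_geP /aff_eval leval_var jN rmorph0 addr0.
rewrite -(constr_ineqsP (v := run_val P d j)); last by move=> c; exact: clock_affE (ltnW jn).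
rewrite -(constr_ineqsP (v := delay (run_val P d j) (d j))); last first.
  by move=> c; rewrite aff_add_varE // -clock_affE 1?ltnW // rmorph1 mul1r.
by rewrite !aff_inP aff_add_varE // -energy_affE 1?ltnW // mulrC.
Qed.

Definition final_ineqs : seq ineq :=
  aff_in lo hi (energy_aff n) ++
  flatten [seq aff_eq (clock_aff n c) 0 | c <- enum 'I_m] ++
  aff_eq (aff_add_var (energy_aff n) (-1) 1) 0.

Lemma final_ineqsP w0 w1 d :
  sys_holds N final_ineqs (run_point w0 w1 d) =
  [&& Defs.inE lo hi (run_en P w0 d n),
      all (fun c => run_val P d n c == 0) (enum 'I_m) & run_en P w0 d n == w1].
Proof.
rewrite !sys_holds_cat aff_inP sys_holds_flatten aff_eqP aff_add_varE //.
rewrite -energy_affE // rmorphN1 mulN1r rmorph0 subr_eq0; congr [&& _, _ & _].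
by apply: eq_all => c; rewrite aff_eqP -clock_affE // rmorph0.
Qed.

Definition run_ineqs : seq ineq :=
  flatten [seq step_ineqs j | j <- iota 0 n] ++ final_ineqs.

Lemma run_okP w0 w1 d :
  run_ok P lo hi d w0 w1 <-> sys_holds N run_ineqs (run_point w0 w1 d).
Proof.
rewrite sys_holds_cat sys_holds_flatten final_ineqsP; split.
- move=> [steps [En [clk0 <-]]]; rewrite En eqxx andbT; apply/andP; split.
    apply/allP => j; rewrite mem_iota => /andP[_ jn]; rewrite step_ineqsP //.
    have [-> [-> [inv [grd [-> ->]]]]] := steps j jn.
    by rewrite sat_cat inv grd.
  by apply/allP => c _; rewrite clk0.
- case/and4P => /allP steps En /allP clk0 /eqP <-.
  split; last by do 2!split=> //; move=> c; apply/eqP/clk0; rewrite mem_enum.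
  move=> j jn; have := steps j; rewrite mem_iota jn step_ineqsP // sat_cat.
  by move=> /(_ isT) /and5P[? ? /andP[? ?] ? ?].
Qed.

Lemma energy_rel_polyhedral : polyhedral (@energy_rel R m P lo hi).
Proof.
apply: polyhedral_ext (polyhedral_proj R run_ineqs (isT : 2 <= N)%N) _ => w0 w1.
split=> [[y [<- <- ycs]]|[d /run_okP dP]]; last by exists (run_point w0 w1 d).
exists (fun j => y j.+2); apply/run_okP.
by rewrite (eq_sys_holds _ (y := y)) // => -[|[|i]].
Qed.

Lemma energy_rel_inE (w0 w1 : R) :
  energy_rel P lo hi w0 w1 -> Defs.inE lo hi w0 /\ Defs.inE lo hi w1.
Proof.
move=> [d [steps [En [_ <-]]]]; split => //.
case: n steps En => [|?] steps En //.
by have [_ [_ [_ [_ []]]]] := steps 0%N isT.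
Qed.

End EnergyPath.

Lemma comp_rel_inE (R : realFieldType) lo hi ps (w0 w1 : R) :
  Defs.inE lo hi w0 -> comp_rel lo hi ps w0 w1 -> Defs.inE lo hi w1.
Proof.
elim: ps w0 => [|[m P] ps IH] w0 /=; first by move=> ? <-.
by move=> _ [w [/energy_rel_inE [_ wE] /(IH _ wE)]].
Qed.

Lemma polyhedral_eq (R : realFieldType) : polyhedral (fun u v : R => u = v).
Proof.
exists [:: (1, -1, 0); (-1, 1, 0)] => u v.
rewrite /sat2 /= rmorph1 rmorphN1 rmorph0 andbT !mul1r !mulN1r subr_le0 addrC subr_le0.
by rewrite -eq_le; split => [->|/eqP].
Qed.

Lemma comp_rel_polyhedral (R : realFieldType) lo hi ps :
  polyhedral (@comp_rel R lo hi ps).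
Proof.
elim: ps => [|[m P] ps IH]; first exact: polyhedral_eq.
exact: (polyhedral_comp (energy_rel_polyhedral R P lo hi) IH).
Qed.

Theorem mainTheorem2 (R : realFieldType) (lo hi : rat) :
  (forall (m : nat) (P : etp m),
      energy_rel_props lo hi (@energy_rel R m P lo hi)) /\
  (forall ps : seq {m : nat & etp m}, ps <> [::] ->
      energy_rel_props lo hi (@comp_rel R lo hi ps)).
Proof.
split=> [m P|[//|[m P] ps] _]; apply: energy_rel_propsP.
- exact: energy_rel_inE.
- exact: energy_rel_polyhedral.
- move=> w0 w2 [w1 [/energy_rel_inE [w0E w1E] w12]].
  by split=> //; exact: comp_rel_inE w1E w12.
- exact: comp_rel_polyhedral.
Qed.
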